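(* Assume the univalence axiom. Let $A\xrightarrow{i}E\xrightarrow{p}B$ be a short exact sequence of abelian groups, $G$ an abelian group, $G\to F\to E$ a short exact sequence, and suppose given path data $i^*(F)=\mathrm{pt}$, i.e. an isomorphism $\psi:G\oplus A\cong i^*(F)$ of middle groups respecting inclusions of $G$ and projections to $A$. Let $G\to F/A\to B$ be the short exact sequence whose middle group is the cokernel $F/A$ of $A\to G\oplus A\xrightarrow{\psi}i^*(F)\to F$, with maps $G\to F\to F/A$ and $F/A\to B$ induced by $F\to E\xrightarrow{p}B$. Then there is path data $p^*(F/A)=F$, i.e. an isomorphism between the middle group of $p^*(F/A)$ and $F$ respecting the inclusions of $G$ and the projections to $E$.
   Context: Short exact sequence $X\xrightarrow{j}M\xrightarrow{q}Y$: $j$ injective, $q$ surjective, $q\circ j=0$, and $X\to\ker q$ surjective. For $g:Y'\to Y$, the pullback $g^*(M)$ is the short exact sequence $X\to M\times_Y Y'\to Y'$ with middle group $\{(m,y')\mid q(m)=g(y')\}$, inclusion $x\mapsto (j(x),0)$ and projection $(m,y')\mapsto y'$. The trivial sequence $\mathrm{pt}$ from $G$ to $A$ is $G\to G\oplus A\to A$. *)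

From HB Require Import structures.
From mathcomp Require Import all_boot all_algebra.
Set Implicit Arguments. Unset Strict Implicit. Unset Printing Implicit Defensive.
Import GRing.Theory.
Local Open Scope ring_scope.

Definition ses (X M Y : zmodType) (j : {additive X -> M}) (q : {additive M -> Y}) : Prop :=
  injective j /\ (forall y, exists m, q m = y) /\ (forall x, q (j x) = 0)
  /\ (forall m, q m = 0 -> exists x, j x = m).

Definition iso_onto (U V : zmodType) (phi : {additive U -> V}) (S : V -> Prop) : Prop :=
  injective phi /\ (forall u, S (phi u)) /\ (forall v, S v -> exists u, phi u = v).

(* The comparison map is [f |-> (pi f, qF f)] from F to the pullback Q x_B E.
   Its kernel is zero: if [pi f = 0] then [f] comes from some [a : A], and then
   [qF f = i a], so [qF f = 0] forces [a = 0] since [i] is injective.  It is onto: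
   given [(q, e)] over the same point of B, lift [q] to [f]; then [e - qF f] lies
   in [ker p = im i], say it is [i a], and [f + (psi (0, a)).1] maps to [(q, e)]. *)
From HB Require Import structures.
From mathcomp Require Import all_boot all_algebra.
Import GRing.Theory.
Local Open Scope ring_scope.

Definition pairf (U V W : zmodType) (f : {additive U -> V}) (g : {additive U -> W})
  (x : U) : (V * W)%type := (f x, g x).

Arguments pairf {U V W}.

Lemma pairf_is_zmod_morphism (U V W : zmodType)
    (f : {additive U -> V}) (g : {additive U -> W}) :
  GRing.zmod_morphism (pairf f g).
Proof. by move=> x y; rewrite /pairf !raddfB. Qed.

HB.instance Definition _ (U V W : zmodType)
    (f : {additive U -> V}) (g : {additive U -> W}) :=
  GRing.isZmodMorphism.Build U (V * W)%type (pairf f g)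
    (@pairf_is_zmod_morphism U V W f g).

Lemma pairf_inj (U V W : zmodType) (f : {additive U -> V}) (g : {additive U -> W}) :
  (forall u, f u = 0 -> g u = 0 -> u = 0) -> injective (pairf f g).
Proof. by move=> ker0; apply: raddf_inj => u [/ker0]. Qed.

Section PairfIsoPullback.

Variables (F Q E B : zmodType).
Variables (pi : {additive F -> Q}) (q : {additive F -> E}).
Variables (r : {additive Q -> B}) (p : {additive E -> B}).

Hypothesis r_pi : forall f, r (pi f) = p (q f).
Hypothesis pi_surj : forall y, exists f, pi f = y.
(* Together these say that [q] restricts to an isomorphism [ker pi -> ker p]. *)
Hypothesis ker_p_lift : forall e, p e = 0 -> exists2 f, pi f = 0 & q f = e.
Hypothesis ker_pi_q : forall f, pi f = 0 -> q f = 0 -> f = 0.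

Lemma pairf_onto_pullback (v : (Q * E)%type) :
  r v.1 = p v.2 -> exists f, pairf pi q f = v.
Proof.
case: v => y e /= rpy.
have [f1 pi_f1] := pi_surj y.
have [|f2 pi_f2 q_f2] := ker_p_lift (e - q f1).
  by rewrite raddfB -r_pi pi_f1 rpy subrr.
by exists (f1 + f2); rewrite /pairf !raddfD pi_f1 pi_f2 q_f2 addr0 addrC subrK.
Qed.

Lemma pairf_iso_pullback :
  iso_onto (pairf pi q) (fun v => r v.1 = p v.2).
Proof.
split; first exact: pairf_inj.
by split=> [f|]; [rewrite /= r_pi | exact: pairf_onto_pullback].
Qed.

End PairfIsoPullback.

Theorem lemma15 (A E B G F Q : zmodType)
  (i : {additive A -> E}) (p : {additive E -> B})
  (jF : {additive G -> F}) (qF : {additive F -> E})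
  (psi : {additive (G * A)%type -> (F * A)%type})
  (pi : {additive F -> Q}) (r : {additive Q -> B}) :
  ses i p -> ses jF qF ->
  (* psi : G (+) A ~= i^*(F) = {(f,a) | qF f = i a}, respecting G and projections to A *)
  iso_onto psi (fun v => qF v.1 = i v.2) ->
  (forall g, psi (g, 0) = (jF g, 0)) ->
  (forall u, (psi u).2 = u.2) ->
  (* pi : F -> Q is the cokernel of A -> G (+) A -> i^*(F) -> F *)
  (forall y, exists f, pi f = y) ->
  (forall f, pi f = 0 <-> exists a, (psi (0, a)).1 = f) ->
  (* r : Q -> B is induced by p o qF *)
  (forall f, r (pi f) = p (qF f)) ->
  (* path data p^*(Q) = F *)
  exists Phi : {additive F -> (Q * E)%type},
    iso_onto Phi (fun v => r v.1 = p v.2)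
    /\ (forall g, Phi (jF g) = (pi (jF g), 0))
    /\ (forall f, (Phi f).2 = qF f).
Proof.
move=> [i_inj [_ [_ ker_p]]] [_ [_ [qF_jF _]]] [_ [psi_pullback _]] _ psi_snd
  pi_surj ker_pi r_pi.
have qF_lift a : qF (psi (0, a)).1 = i a.
  by have := psi_pullback (0, a); rewrite psi_snd.
exists (pairf pi qF); split; last by split=> [g|f] /=; rewrite /pairf ?qF_jF.
apply: pairf_iso_pullback => // [e /ker_p[a <-]|f /ker_pi[a <-]].
  by exists (psi (0, a)).1; [apply/ker_pi; exists a | exact: qF_lift].
rewrite qF_lift -(raddf0 i) => /i_inj ->.
by rewrite (raddf0 psi).
Qed.
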